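(* Let $\vec{\mathcal H}=(V,\mathcal A)$ be a directed hypergraph and $s,t\in V$ distinct. Let $\vec G=(V',A')$ be the directed graph with $V'=V\cup\{w_{(X,v)}:(X,v)\in\mathcal A\}$ (one new vertex per hyperarc) whose arc set contains, for every hyperarc $(X,v)\in\mathcal A$, the arc $w_{(X,v)}v$ and, for every $x\in X$, $|\mathcal A|+1$ parallel arcs $x\,w_{(X,v)}$; let $\overleftarrow G$ be obtained from $\vec G$ by reversing every arc. Then $S^{\vec{\mathcal H}}_{s,t}=V\cap S^{\vec G}_{s,t}$ and $T^{\vec{\mathcal H}}_{t,s}=V\cap S^{\overleftarrow G}_{t,s}$.
   Context: A directed hypergraph $\vec{\mathcal H}=(V,\mathcal A)$ has finite vertex set $V$ and a finite multiset $\mathcal A$ of hyperarcs $(X,v)$ with $X\subseteq V$, $v\in V\setminus X$. For $\emptyset\ne Z\subsetneq V$: $d^+_{\vec{\mathcal H}}(Z)$ is the number of hyperarcs $(X,v)$ with $v\notin Z$ and $X\cap Z\ne\emptyset$; $d^-_{\vec{\mathcal H}}(Z)$ is the number of hyperarcs $(X,v)$ with $v\in Z$ and $X\not\subseteq Z$. In a directed graph $G$, $d^+_G(Z)$ is the number of arcs with tail in $Z$ and head outside $Z$. For vertices $a\ne b$, an $(a,b)$-separator is a vertex set containing $a$ but not $b$. $S^{\vec{\mathcal H}}_{s,t}$ denotes the (unique) $(s,t)$-separator of minimum $d^+_{\vec{\mathcal H}}$ that is contained in every $(s,t)$-separator of minimum $d^+_{\vec{\mathcal H}}$; $T^{\vec{\mathcal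 H}}_{t,s}$ denotes the (unique) $(t,s)$-separator of minimum $d^-_{\vec{\mathcal H}}$ that is contained in every $(t,s)$-separator of minimum $d^-_{\vec{\mathcal H}}$. For a directed graph $G$, $S^{G}_{a,b}$ denotes the unique $(a,b)$-separator of minimum $d^+_G$ contained in every $(a,b)$-separator of minimum $d^+_G$. (Uniqueness follows from submodularity of these degree functions.) *)

From mathcomp Require Import all_boot.
Set Implicit Arguments. Unset Strict Implicit. Unset Printing Implicit Defensive.

(* Directed hypergraph on a finite vertex type V: hyperarcs are indexed by a
   finite type A (a multiset of hyperarcs); hyperarc a is (tl a, hd a). *)

Definition hdout (V A : finType) (tl : A -> {set V}) (hd : A -> V) (Z : {set V}) : nat :=
  #|[set a | (hd a \notin Z) && (tl a :&: Z != set0)]|.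

Definition hdin (V A : finType) (tl : A -> {set V}) (hd : A -> V) (Z : {set V}) : nat :=
  #|[set a | (hd a \in Z) && ~~ (tl a \subset Z)]|.

Definition gdout (W E : finType) (tl hd : E -> W) (Z : {set W}) : nat :=
  #|[set e | (tl e \in Z) && (hd e \notin Z)]|.

Definition is_sep (T : finType) (a b : T) (Z : {set T}) : Prop :=
  a \in Z /\ b \notin Z.

Definition is_min_incl_sep (T : finType) (d : {set T} -> nat) (a b : T)
    (S : {set T}) : Prop :=
  [/\ is_sep a b S,
      (forall Z, is_sep a b Z -> d S <= d Z) &
      (forall Z, is_sep a b Z -> d Z = d S -> S \subset Z)].

(* The digraph G associated to the hypergraph:
   vertices V + A (inr a = w_a); arcs:
   - inl a : the arc w_a -> hd a;
   - inr (a, x, i) with x \in tl a, i < |A|+1 : copy i of the arc x -> w_a. *)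
Definition Garc_pred (V A : finType) (tl : A -> {set V}) :
    pred (A * V * 'I_#|A|.+1) := fun p => p.1.2 \in tl p.1.1.

Definition Garc (V A : finType) (tl : A -> {set V}) : finType :=
  (A + {p : A * V * 'I_#|A|.+1 | Garc_pred tl p})%type.

Definition Gtail (V A : finType) (tl : A -> {set V}) (hd : A -> V)
    (e : Garc tl) : (V + A)%type :=
  match e with
  | inl a => inr a
  | inr p => inl (val p).1.2
  end.

Definition Ghead (V A : finType) (tl : A -> {set V}) (hd : A -> V)
    (e : Garc tl) : (V + A)%type :=
  match e with
  | inl a => inl (hd a)
  | inr p => inr (val p).1.1
  end.

Definition trace_V (V A : finType) (Z : {set (V + A)}) : {set V} :=
  [set v | inl v \in Z].
Arguments Gtail {V A} tl hd e.
Arguments Ghead {V A} tl hd e.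

From mathcomp Require Import all_boot.

(* The map tr := trace_V sends a vertex set Z of the digraph G
   to its trace Z ∩ V on the vertices of the hypergraph H.  Minimal-inclusive separators transfer along tr
   as soon as (i) tr commutes with being an (s,t)-separator and is monotone,
   (ii) d_H (tr Z) <= d_G Z for every Z, and (iii) every Y has a lift ex Y
   with tr (ex Y) = Y and d_G (ex Y) <= d_H Y: then both minimum degrees
   coincide, and inclusion-minimality passes in both directions.
   For d^+ the lift adds w_a exactly when the tail of a meets Y.  The lower
   bound (ii) holds because a cut of G either contains one of the |A|+1
   parallel arcs x -> w_a (and then exceeds every hypergraph degree) or
   contains, for each hyperarc counted by d^+_H, its arc w_a -> hd a.
   For d^- everything follows by complementation: d^-_H Y = d^+_H (~Y),
   the cut of Z in the reversed graph is the cut of ~Z in G, and tr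
   commutes with complement. *)

Section Transfer.
Variables (T U : finType) (dH : {set T} -> nat) (dG : {set U} -> nat).
Variables (tr : {set U} -> {set T}) (ex : {set T} -> {set U}).
Variables (s t : T) (s' t' : U).
Hypothesis tr_ex : forall Y, tr (ex Y) = Y.
Hypothesis dG_ex : forall Y, dG (ex Y) <= dH Y.
Hypothesis dH_tr : forall Z, dH (tr Z) <= dG Z.
Hypothesis sep_tr : forall Z, is_sep s' t' Z <-> is_sep s t (tr Z).
Hypothesis tr_mono : forall Z1 Z2 : {set U}, Z1 \subset Z2 -> tr Z1 \subset tr Z2.

Lemma min_incl_sep_transfer (SH : {set T}) (SG : {set U}) :
  is_min_incl_sep dH s t SH -> is_min_incl_sep dG s' t' SG -> SH = tr SG.
Proof.
move=> [sepH minH inclH] [sepG minG inclG].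
have sep_exH : is_sep s' t' (ex SH) by apply/sep_tr; rewrite tr_ex.
have sep_trG : is_sep s t (tr SG) by apply/sep_tr.
(* The chain dH SH <= dH (tr SG) <= dG SG <= dG (ex SH) <= dH SH collapses. *)
have le_G := minG _ sep_exH; have le_H := minH _ sep_trG.
have le_ex := dG_ex SH; have le_tr := dH_tr SG.
have eqH : dH (tr SG) = dH SH.
  by apply/eqP; rewrite eqn_leq le_H andbT (leq_trans le_tr) ?(leq_trans le_G).
have eqG : dG (ex SH) = dG SG.
  by apply/eqP; rewrite eqn_leq le_G andbT (leq_trans le_ex) ?(leq_trans le_H).
apply/eqP; rewrite eqEsubset inclH //=.
by rewrite -[SH]tr_ex; apply/tr_mono/inclG.
Qed.

End Transfer.

Lemma gdout_rev (W E : finType) (tl hd : E -> W) (Z : {set W}) :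
  gdout hd tl Z = gdout tl hd (~: Z).
Proof. by apply: eq_card => e; rewrite !inE negbK andbC. Qed.

Section HypergraphDigraph.
Variables (V A : finType) (tl : A -> {set V}) (hd : A -> V).

Local Notation dHout := (hdout tl hd).
Local Notation dHin := (hdin tl hd).
Local Notation dGout := (gdout (Gtail tl hd) (Ghead tl hd)).
Local Notation dGrev := (gdout (Ghead tl hd) (Gtail tl hd)).

Lemma hdin_hdoutC (Y : {set V}) : dHin Y = dHout (~: Y).
Proof.
apply: eq_card => a; rewrite !inE negbK; congr (_ && _).
by rewrite setI_eq0 -subsets_disjoint.
Qed.

Lemma trace_VC (Z : {set (V + A)}) : trace_V (~: Z) = ~: trace_V Z.
Proof. by apply/setP=> v; rewrite !inE. Qed.

Lemma trace_V_sep (a b : V) (Z : {set (V + A)}) :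
  is_sep (inl a) (inl b) Z <-> is_sep a b (trace_V Z).
Proof. by rewrite /is_sep /trace_V !inE. Qed.

Lemma trace_V_mono (Z1 Z2 : {set (V + A)}) :
  Z1 \subset Z2 -> trace_V Z1 \subset trace_V Z2.
Proof. by move/subsetP=> sub12; apply/subsetP=> v; rewrite !inE => /sub12. Qed.

Definition head_arc (a : A) : Garc tl := inl a.

Lemma head_arc_inj : injective head_arc.
Proof. by move=> a b []. Qed.

Definition parallel_arcs (a : A) (x : V) (xa : x \in tl a) : {set Garc tl} :=
  [set inr (exist (Garc_pred tl) (a, x, i) xa) | i : 'I_#|A|.+1].

Lemma card_parallel_arcs (a : A) (x : V) (xa : x \in tl a) :
  #|parallel_arcs a x xa| = #|A|.+1.
Proof.
rewrite card_imset ?cardsT ?card_ord // => i j.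
by move/(congr1 (fun e : Garc tl => if e is inr p then (val p).2 else i)).
Qed.

(* Lower bound (ii) for d^+: a hypergraph degree is at most |A|, while a cut
   containing one parallel arc contains all |A|+1 of its copies. *)
Lemma hdout_trace_le (Z : {set (V + A)}) : dHout (trace_V Z) <= dGout Z.
Proof.
case: (boolP [exists a, (tl a :&: trace_V Z != set0) && (inr a \notin Z)]).
- (* some parallel family x -> w_a lies in the cut *)
  move=> /existsP[a /andP[/set0Pn[x /setIP[xa]]]]; rewrite inE => xZ aZ.
  apply: leq_trans (max_card _) _; apply: ltnW.
  rewrite -(card_parallel_arcs _ _ xa); apply: subset_leq_card.
  by apply/subsetP=> e /imsetP[i _ ->]; rewrite inE /= xZ aZ.
- (* every hyperarc in the cut has its head arc in the cut *)
  move=> /existsPn no_cross.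
  rewrite /hdout /gdout -(card_imset _ head_arc_inj); apply: subset_leq_card.
  apply/subsetP=> e /imsetP[a]; rewrite inE => /andP[hdZ meetZ] ->.
  move: (no_cross a); rewrite meetZ negbK => aZ.
  by rewrite inE /= aZ; rewrite inE in hdZ.
Qed.

Definition lift_out (Y : {set V}) : {set (V + A)} :=
  [set z | match z with inl v => v \in Y | inr a => tl a :&: Y != set0 end].

Lemma trace_lift_out (Y : {set V}) : trace_V (lift_out Y) = Y.
Proof. by apply/setP=> v; rewrite !inE. Qed.

(* Upper bound (iii) for d^+: only head arcs of cut hyperarcs leave the lift. *)
Lemma gdout_lift_out_le (Y : {set V}) : dGout (lift_out Y) <= dHout Y.
Proof.
rewrite /hdout /gdout -(card_imset _ head_arc_inj); apply: subset_leq_card.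
apply/subsetP=> [[a | [[[a x] i] xa]]]; rewrite !inE /=.
- by move=> /andP[meetY hdY]; apply/imsetP; exists a; rewrite ?inE ?meetY ?hdY.
- (* a parallel arc x -> w_a never leaves the lift *)
  move=> /andP[xY]; rewrite negbK => /eqP/setP/(_ x).
  by rewrite !inE xY andbT (xa : x \in tl a).
Qed.

(* Lift for d^-: the complement of the d^+-lift of the complement, i.e. add
   w_a exactly when the tail of a is contained in Y. *)
Definition lift_in (Y : {set V}) : {set (V + A)} := ~: lift_out (~: Y).

Lemma trace_lift_in (Y : {set V}) : trace_V (lift_in Y) = Y.
Proof. by rewrite /lift_in trace_VC trace_lift_out setCK. Qed.

Lemma hdin_trace_le (Z : {set (V + A)}) : dHin (trace_V Z) <= dGrev Z.
Proof. by rewrite hdin_hdoutC -trace_VC gdout_rev hdout_trace_le. Qed.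

Lemma gdrev_lift_in_le (Y : {set V}) : dGrev (lift_in Y) <= dHin Y.
Proof. by rewrite gdout_rev setCK hdin_hdoutC gdout_lift_out_le. Qed.

End HypergraphDigraph.

(* Both halves are instances of the transfer lemma. *)
Theorem mainTheorem14 (V A : finType) (tl : A -> {set V}) (hd : A -> V)
    (Hhyp : forall a, hd a \notin tl a) (s t : V) (Hst : s != t) :
  (forall (SH : {set V}) (SG : {set (V + A)}),
      is_min_incl_sep (hdout tl hd) s t SH ->
      is_min_incl_sep (gdout (Gtail tl hd) (Ghead tl hd)) (inl s) (inl t) SG ->
      SH = trace_V SG) /\
  (forall (TH : {set V}) (SGr : {set (V + A)}),
      is_min_incl_sep (hdin tl hd) t s TH ->
      is_min_incl_sep (gdout (Ghead tl hd) (Gtail tl hd)) (inl t) (inl s) SGr ->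
      TH = trace_V SGr).
Proof.
split=> SH SG.
- apply: (@min_incl_sep_transfer _ _ _ _ _ (lift_out _ _ tl)).
  + exact: trace_lift_out.
  + exact: gdout_lift_out_le.
  + exact: hdout_trace_le.
  + exact: trace_V_sep.
  + exact: trace_V_mono.
- apply: (@min_incl_sep_transfer _ _ _ _ _ (lift_in _ _ tl)).
  + exact: trace_lift_in.
  + exact: gdrev_lift_in_le.
  + exact: hdin_trace_le.
  + exact: trace_V_sep.
  + exact: trace_V_mono.
Qed.
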